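(* In the setting described in the context (with $n$ sufficiently large), let $\kappa>0$ and let $\eta$ satisfy $0\le \eta\le \frac{1}{\sqrt n}$. Then any polytope $P\subseteq\mathbb{R}^{n+1}$ such that \[ P\subseteq K(\eta,\kappa)\subseteq \frac{n}{96\Delta^2\max\{\kappa,1\}}\,P \] has at least $\frac{m}{n}$ vertices.
   Context: Let $C_1$ be an absolute constant such that for every sufficiently large $n$ and every $2\le m\le \exp(n/C_1)$ there exist $y_1,\dots,y_m\in\mathbb{R}^n$ with $\frac12\sqrt n\le\|y_i\|\le 2\sqrt n$ and $|\langle y_i,y_j\rangle|\le C_1\sqrt{n\log m}$ for $i\ne j$. Let $C_2$ be an absolute constant such that for all unit vectors $v_1,\dots,v_m\in S^{n-1}$ and $X$ distributed as $N(0,I_n)$, uniformly on $\sqrt n S^{n-1}$, or uniformly on $\sqrt n B_2^n$, one has $\mathbb{P}(\max_{i}|\langle v_i,X\rangle|\ge C_2\sqrt{\log m})\le m^{-10}$. Set $C_0=\max(C_1,100C_2)$. Let $n$ be sufficiently large, $m$ an integer with $C_0 n\le m\le \exp(n/C_0)$, and $\Delta=C_0\sqrt{\log m}$. Let $x_1,\dots,x_m\in\mathbb{R}^n$ satisfy $\frac{\sqrt n}{2\Delta}\le\|x_i\|\le\frac{2\sqrt n}{\Delta}$ for all $i$ and $|\langle x_i,x_j\rangle|\le \frac{\sqrt n}{\Delta}$ for $i\ne j$. $B_2^n$ is the Euclidean unit ball. Define $Q=\operatorname{conv}\{\pm x_i\}$, $Q_1=\operatorname{conv}(Q\cup B_2^n)$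 and $Q_1^\circ=(Q_1)^\circ=Q^\circ\cap B_2^n$, where $L^\circ=\{y:\langle y,z\rangle\le1\ \forall z\in L\}$. Equip $\mathbb{R}^{n+1}$ with orthonormal basis $e_0,e_1,\dots,e_n$ and identify $\mathbb{R}^n$ with $\operatorname{span}\{e_1,\dots,e_n\}$. For $\eta\in\mathbb{R}$ and $\kappa>0$ set \[ K(\eta,\kappa)=\operatorname{conv}\big((1-\eta)e_0+Q,\ -\kappa\eta e_0+\kappa Q_1^\circ\big)\subseteq\mathbb{R}^{n+1}. \] *)

From HB Require Import structures.
From mathcomp Require Import all_boot all_order all_algebra.
From mathcomp Require Import all_classical all_reals all_analysis.
Set Implicit Arguments.
Unset Strict Implicit.
Unset Printing Implicit Defensive.
Import Order.TTheory GRing.Theory Num.Theory.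
Local Open Scope classical_set_scope.
Local Open Scope ring_scope.

Section Defs.
Context {R : realType}.

Definition dotv {n : nat} (u v : 'rV[R]_n) : R := \sum_(i < n) u 0 i * v 0 i.
Definition normv {n : nat} (u : 'rV[R]_n) : R := Num.sqrt (dotv u u).

Definition eball (n : nat) (r : R) : set 'rV[R]_n := [set x | normv x <= r].
Definition esphere (n : nat) (r : R) : set 'rV[R]_n := [set x | normv x = r].

Definition conv {n : nat} (A : set 'rV[R]_n) : set 'rV[R]_n :=
  [set x | exists (k : nat) (w : 'I_k -> R) (p : 'I_k -> 'rV[R]_n),
     (forall i, 0 <= w i) /\ \sum_(i < k) w i = 1 /\
     (forall i, A (p i)) /\ x = \sum_(i < k) w i *: p i].

Definition polar {n : nat} (L : set 'rV[R]_n) : set 'rV[R]_n :=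
  [set y | forall z, L z -> dotv y z <= 1].

Definition dil {n : nat} (t : R) (L : set 'rV[R]_n) : set 'rV[R]_n :=
  [set t *: z | z in L].

(** R^{n+1} with basis e_0, e_1, ..., e_n, R^n = span{e_1..e_n}:
    lift0 t y is the point t e_0 + y *)
Definition lift0 {n : nat} (t : R) (y : 'rV[R]_n) : 'rV[R]_n.+1 :=
  \row_(j < n.+1) (if unlift ord0 j is Some i then y 0 i else t).

Definition polytope {n : nat} (P : set 'rV[R]_n) : Prop :=
  exists V : seq 'rV[R]_n, P = conv [set` V].

(** vertices of a polytope = its extreme points *)
Definition extreme_point {n : nat} (P : set 'rV[R]_n) (p : 'rV[R]_n) : Prop :=
  P p /\ forall a b t, P a -> P b -> 0 < t < 1 ->
     p = (1 - t) *: a + t *: b -> a = p /\ b = p.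

Definition Qbody {n m : nat} (x : 'I_m -> 'rV[R]_n) : set 'rV[R]_n :=
  conv [set y | exists i, y = x i \/ y = - x i].
Definition Q1body {n m : nat} (x : 'I_m -> 'rV[R]_n) : set 'rV[R]_n :=
  conv (Qbody x `|` @eball n 1).
Definition Q1polar {n m : nat} (x : 'I_m -> 'rV[R]_n) : set 'rV[R]_n :=
  polar (Q1body x).

Definition Kbody {n m : nat} (x : 'I_m -> 'rV[R]_n) (eta kappa : R)
  : set 'rV[R]_n.+1 :=
  conv ([set lift0 (1 - eta) q | q in Qbody x] `|`
        [set lift0 (- (kappa * eta)) (kappa *: y) | y in Q1polar x]).

Local Open Scope ereal_scope.

Definition box_cover {n : nat} (E : set 'rV[R]_n) (a b : nat -> 'rV[R]_n) : Prop :=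
  (forall k (i : 'I_n), (a k 0 i <= b k 0 i)%R) /\
  (forall x, E x -> exists k, forall i : 'I_n, (a k 0 i <= x 0 i <= b k 0 i)%R).

Definition box_outer {n : nat} (w : 'rV[R]_n -> 'rV[R]_n -> R)
  (E : set 'rV[R]_n) : \bar R :=
  ereal_inf [set s | exists a b, box_cover E a b /\
                     s = \sum_(k <oo) (w (a k) (b k))%:E].

Definition leb_outer (n : nat) : set 'rV[R]_n -> \bar R :=
  box_outer (fun a b => \prod_(i < n) (b 0 i - a 0 i))%R.

Definition gauss_outer (n : nat) : set 'rV[R]_n -> \bar R :=
  box_outer (fun a b => \prod_(i < n) fine (normal_prob 0 1 `[a 0 i, b 0 i]%classic))%R.

Local Close Scope ereal_scope.

Definition gauss_prob (n : nat) (E : set 'rV[R]_n) : R := fine (@gauss_outer n E).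

Definition ball_prob (n : nat) (r : R) (E : set 'rV[R]_n) : R :=
  fine (@leb_outer n (E `&` @eball n r)) / fine (@leb_outer n (@eball n r)).

(** probability that X uniform (normalized surface measure) on r S^{n-1}
    lies in E: relative volume of the cone {t x : 0 < t <= 1, x in E ∩ rS} *)
Definition sphere_prob (n : nat) (r : R) (E : set 'rV[R]_n) : R :=
  fine (@leb_outer n [set t *: x | t in `]0, 1]%classic & x in E `&` @esphere n r])
  / fine (@leb_outer n (@eball n r)).

Definition C1_property (C1 : R) : Prop :=
  exists N : nat, forall n : nat, (N <= n)%N ->
  forall m : nat, (2 <= m)%N -> m%:R <= expR (n%:R / C1) ->
  exists y : 'I_m -> 'rV[R]_n,
    (forall i, Num.sqrt n%:R / 2 <= normv (y i) <= 2 * Num.sqrt n%:R) /\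
    (forall i j, i != j -> `|dotv (y i) (y j)| <= C1 * Num.sqrt (n%:R * ln m%:R)).

Definition C2_property (C2 : R) : Prop :=
  forall n m : nat, (1 <= n)%N -> (1 <= m)%N ->
  forall v : 'I_m -> 'rV[R]_n, (forall i, normv (v i) = 1) ->
  let E := [set X : 'rV[R]_n | exists i, C2 * Num.sqrt (ln m%:R) <= `|dotv (v i) X|] in
  [/\ gauss_prob E <= m%:R ^- 10,
      sphere_prob (Num.sqrt n%:R) E <= m%:R ^- 10 &
      ball_prob (Num.sqrt n%:R) E <= m%:R ^- 10].

End Defs.

Arguments eball {R} n r.
Arguments esphere {R} n r.
Arguments leb_outer {R} n.
Arguments gauss_outer {R} n.
Arguments gauss_prob {R} n.
Arguments ball_prob {R} n.
Arguments sphere_prob {R} n.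

From Pilot Require Import Defs.
From HB Require Import structures.
From mathcomp Require Import all_boot all_order all_algebra.
From mathcomp Require Import all_classical all_reals all_analysis.
From mathcomp Require Import ring lra.
Import Order.TTheory GRing.Theory Num.Theory.
Local Open Scope classical_set_scope.
Local Open Scope ring_scope.

(* Test the polytope with the functionals [g_i = x_i - c e_0].  Every point z
   of K(eta, kappa), hence every vertex of P, is dominated: some
   sub-probability vector A gives [<z, g_i> <= A_i |x_i|^2 + B] for all i.
   This holds on the generators (a point +-x_k of Q only pays for its own
   functional, up to the cross terms [|<x_k, x_i>|], and the points of
   kappa Q_1° are uniformly small against every x_i) and survives convex
   combinations.  On the other hand [(1 - eta) e_0 + x_i] lies in K, hence in
   lambda P, so some vertex v of P has [<v, g_i> >= B + |x_i|^2 / n], which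
   forces [A_i >= 1/n] for the weights of v.  The weights of a single vertex
   sum to at most 1, so P needs at least m/n vertices. *)

Section Development.
Set Implicit Arguments.
Unset Strict Implicit.
Variable R : realType.

Section DotProduct.
Context {d : nat}.
Implicit Types (u v w : 'rV[R]_d).

Lemma dotvC u v : dotv u v = dotv v u.
Proof. by apply: eq_bigr => i _; rewrite mulrC. Qed.

Lemma dotvDl u v w : dotv (u + v) w = dotv u w + dotv v w.
Proof. by rewrite /dotv -big_split; apply: eq_bigr => i _; rewrite mxE mulrDl. Qed.

Lemma dotvZl a u w : dotv (a *: u) w = a * dotv u w.
Proof. by rewrite /dotv mulr_sumr; apply: eq_bigr => i _; rewrite mxE mulrA. Qed.

Lemma dotvNl u w : dotv (- u) w = - dotv u w.
Proof. by rewrite -scaleN1r dotvZl mulN1r. Qed.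

Lemma dotvBl u v w : dotv (u - v) w = dotv u w - dotv v w.
Proof. by rewrite dotvDl dotvNl. Qed.

Lemma dotvDr u v w : dotv w (u + v) = dotv w u + dotv w v.
Proof. by rewrite dotvC dotvDl !(dotvC w). Qed.

Lemma dotvZr a u w : dotv w (a *: u) = a * dotv w u.
Proof. by rewrite dotvC dotvZl dotvC. Qed.

Lemma dotv_suml k (c : 'I_k -> R) (p : 'I_k -> 'rV[R]_d) w :
  dotv (\sum_(j < k) c j *: p j) w = \sum_(j < k) c j * dotv (p j) w.
Proof.
apply: (big_ind2 (fun a r => dotv a w = r)).
- by rewrite /dotv big1 // => i _; rewrite mxE mul0r.
- by move=> a r b r' <- <-; exact: dotvDl.
- by move=> j _; rewrite dotvZl.
Qed.

Lemma dotvv_ge0 u : 0 <= dotv u u.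
Proof. by apply: sumr_ge0 => i _; rewrite -expr2 sqr_ge0. Qed.

Lemma dotvv_eq0 u : dotv u u = 0 -> u = 0.
Proof.
move=> u0; apply/rowP => i; rewrite mxE.
have /eqP : u 0 i * u 0 i = 0.
  by apply: (psumr_eq0P _ u0) => // j _; rewrite -expr2 sqr_ge0.
by rewrite mulf_eq0 orbb => /eqP.
Qed.

Lemma normv_sqr u : normv u ^+ 2 = dotv u u.
Proof. by rewrite sqr_sqrtr // dotvv_ge0. Qed.

Lemma dotv_le_sqr u v : 2 * dotv u v <= dotv u u + dotv v v.
Proof.
have := dotvv_ge0 (u - v).
by rewrite dotvBl !(dotvC _ (u - v)) !dotvBl (dotvC v u); lra.
Qed.

Lemma dotv_combE t u v :
  (1 - t) * dotv u u + t * dotv v v - dotv ((1 - t) *: u + t *: v) ((1 - t) *: u + t *: v)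
  = t * (1 - t) * dotv (u - v) (u - v).
Proof.
rewrite dotvBl !(dotvC _ (u - v)) !dotvBl !dotvDl !dotvZl !dotvDr !dotvZr.
by rewrite (dotvC v u); ring.
Qed.

Lemma dotv_lift0 t a v w : dotv (Defs.lift0 t v) (Defs.lift0 a w) = t * a + dotv v w.
Proof.
rewrite /dotv big_ord_recl !mxE unlift_none; congr (_ + _).
by apply: eq_bigr => j _; rewrite !mxE liftK.
Qed.

End DotProduct.

Section ConvexHull.
Context {d : nat}.
Implicit Types (S : set 'rV[R]_d).

Lemma sub_conv S : S `<=` Defs.conv S.
Proof.
move=> a Sa; exists 1%N, (fun _ => 1), (fun _ => a).
by rewrite !big_ord1 scale1r.
Qed.

Lemma conv_dotv_le S g r : (forall u, S u -> dotv u g <= r) ->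
  forall a, Defs.conv S a -> dotv a g <= r.
Proof.
move=> Sr a [k [w [p [w0 [w1 [Sp ->]]]]]].
rewrite dotv_suml -[r]mul1r -w1 mulr_suml.
by apply: ler_sum => j _; rewrite ler_wpM2l // Sr.
Qed.

Lemma convex_comb_max_eq (t a b c : R) : 0 < t < 1 -> a <= c -> b <= c ->
  c = (1 - t) * a + t * b -> a = c /\ b = c.
Proof.
move=> /andP [t0 t1] ac bc e.
have ta : 0 <= (1 - t) * (c - a) by apply: mulr_ge0; lra.
have tb : 0 <= t * (c - b) by apply: mulr_ge0; lra.
have tab : (1 - t) * (c - a) + t * (c - b) = 0 by rewrite {1 2}e; ring.
by split; nra.
Qed.

Lemma comb_face k (w : 'I_k -> R) (p : 'I_k -> 'rV[R]_d) g r :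
  (forall j, 0 <= w j) -> \sum_j w j = 1 -> (forall j, dotv (p j) g <= r) ->
  dotv (\sum_j w j *: p j) g = r -> forall j, w j != 0 -> dotv (p j) g = r.
Proof.
move=> w0 w1 pr e j /negPf wj0.
have wr_ge0 i : 0 <= w i * (r - dotv (p i) g) by rewrite mulr_ge0 // subr_ge0.
have sum0 : \sum_j w j * (r - dotv (p j) g) = 0.
  by rewrite (eq_bigr _ (fun j _ => mulrBr _ _ _)) sumrB -mulr_suml w1 -dotv_suml e; ring.
have /eqP := @psumr_eq0P _ _ xpredT _ (fun i _ => wr_ge0 i) sum0 j isT.
by rewrite mulf_eq0 wj0 subr_eq0 => /eqP <-.
Qed.

Lemma sqnorm_comb_le k (w : 'I_k -> R) (p : 'I_k -> 'rV[R]_d) r :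
  (forall j, 0 <= w j) -> \sum_j w j = 1 ->
  (forall j, w j != 0 -> dotv (p j) (p j) <= r) ->
  dotv (\sum_j w j *: p j) (\sum_j w j *: p j) <= r.
Proof.
move=> w0 w1 pr; set a := \sum_j w j *: p j.
have comb_le j : w j * dotv (p j) a <= w j * ((r + dotv a a) / 2).
  have [->|wj0] := eqVneq (w j) 0; first by rewrite !mul0r.
  by rewrite ler_wpM2l //; have := dotv_le_sqr (p j) a; have := pr j wj0; lra.
suff : dotv a a <= (r + dotv a a) / 2 by lra.
have : \sum_j w j * dotv (p j) a <= \sum_j w j * ((r + dotv a a) / 2).
  by apply: ler_sum => j _; exact: comb_le.
by rewrite -mulr_suml w1 mul1r -dotv_suml.
Qed.

Lemma seq_lexmax (T : eqType) (f h : T -> R) (V : seq T) : V != [::] ->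
  exists2 v, v \in V & forall u, u \in V -> f u <= f v /\ (f u = f v -> h u <= h v).
Proof.
case: V => // v0 V _; set V' := v0 :: V.
have [i1 _ max1] := @arg_maxP _ _ _ (ord0 : 'I_(size V')) xpredT (fun j => f (nth v0 V' j)) isT.
have [|i2 /eqP fi2 max2] := @arg_maxP _ _ _ i1 (fun j => f (nth v0 V' j) == f (nth v0 V' i1))
  (fun j => h (nth v0 V' j)); first by rewrite eqxx.
exists (nth v0 V' i2); first by rewrite mem_nth.
move=> u /(nthP v0) [j jlt <-]; split; first by rewrite fi2; exact: (max1 (Ordinal jlt)).
by move=> e; apply: (max2 (Ordinal jlt)); rewrite /= e fi2.
Qed.

(* The squared norm is strictly convex and, on the face of [conv V] where
   [<., g>] is maximal, it is maximal at [v]. *)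
Lemma extreme_lexmax (V : seq 'rV[R]_d) g v : v \in V ->
  (forall u, u \in V -> dotv u g <= dotv v g /\ (dotv u g = dotv v g -> dotv u u <= dotv v v)) ->
  extreme_point (Defs.conv [set` V]) v.
Proof.
move=> Vv vmax.
have gmax : forall a, Defs.conv [set` V] a -> dotv a g <= dotv v g.
  by apply: conv_dotv_le => u /vmax [].
have face a : Defs.conv [set` V] a -> dotv a g = dotv v g -> dotv a a <= dotv v v.
  move=> [k [w [p [w0 [w1 [Vp ->]]]]]] ga.
  apply: sqnorm_comb_le => // j wj; apply: (vmax _ (Vp j)).2.
  by apply: (comb_face w0 w1 _ ga) => // i; case: (vmax _ (Vp i)).
split=> [|a b t Va Vb t01 vab]; first exact: sub_conv.
have [ga gb] : dotv a g = dotv v g /\ dotv b g = dotv v g.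
  by apply: (convex_comb_max_eq t01 (gmax a Va) (gmax b Vb)); rewrite vab dotvDl !dotvZl.
have t_gt0 : 0 < t * (1 - t) by move: t01 => /andP [t0 t1]; apply: mulr_gt0; lra.
have ab : a = b.
  apply/subr0_eq/dotvv_eq0/eqP; rewrite eq_le dotvv_ge0 andbT -(pmulr_rle0 _ t_gt0).
  rewrite -dotv_combE -vab; have := face a Va ga; have := face b Vb gb.
  by move: t01 => /andP [t0 t1]; nra.
by rewrite vab -ab -scalerDl subrK scale1r.
Qed.

Lemma polytope_extreme_ge (P : set 'rV[R]_d) g z : polytope P -> P z ->
  exists2 v, extreme_point P v & dotv z g <= dotv v g.
Proof.
move=> [V ->] Pz.
have V0 : V != [::].
  case: V Pz => // [[[|k] [w [p [_ [w1 [Vp _]]]]]]]; last by have := Vp ord0.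
  by move: w1; rewrite big_ord0 => /eqP; rewrite eq_sym oner_eq0.
have [v Vv vmax] := seq_lexmax (fun u => dotv u g) (fun u => dotv u u) V0.
by exists v; [exact: (extreme_lexmax Vv vmax) | apply: conv_dotv_le Pz => u /vmax []].
Qed.

End ConvexHull.

Lemma fractional_count (T : eqType) m (v : 'I_m -> T) (A : T -> 'I_m -> R) eps :
  (forall j i, 0 <= A (v j) i) -> (forall j, \sum_i A (v j) i <= 1) ->
  (forall i, eps <= A (v i) i) ->
  m%:R * eps <= (size (undup [seq v i | i <- enum 'I_m]))%:R.
Proof.
move=> A_ge0 A_le1 epsA; set W := undup _.
have W_v w : w \in W -> exists j, w = v j.
  by rewrite mem_undup => /mapP [j _ ->]; exists j.
have -> : m%:R * eps = \sum_(i < m) eps by rewrite sumr_const card_ord mulr_natl.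
apply: (le_trans (y := \sum_i A (v i) i)); first by apply: ler_sum.
have -> : \sum_i A (v i) i = \sum_(w <- W) \sum_i (v i == w)%:R * A w i.
  rewrite exchange_big /=; apply: eq_bigr => i _.
  rewrite (bigD1_seq (v i)) ?undup_uniq ?mem_undup ?map_f ?mem_enum ?mem_index_enum //=.
  rewrite eqxx mul1r big1 ?addr0 // => w /negPf.
  by rewrite eq_sym => ->; rewrite mul0r.
rewrite -sum1_size natr_sum !big_seq.
apply: ler_sum => w /W_v [j ->]; apply: le_trans (A_le1 j).
by apply: ler_sum => i _; case: eqP; rewrite ?mul1r ?mul0r.
Qed.

Definition dominated d m (g : 'I_m -> 'rV[R]_d) (rho : 'I_m -> R) (B : R) :
    set 'rV[R]_d :=
  [set z | exists A : 'I_m -> R, [/\ forall i, 0 <= A i, \sum_i A i <= 1 &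
     forall i, dotv z (g i) <= A i * rho i + B]].

Section Dominated.
Context {d m : nat} (g : 'I_m -> 'rV[R]_d) (rho : 'I_m -> R).

Lemma dominated0 B z : (forall i, dotv z (g i) <= B) -> dominated g rho B z.
Proof.
by move=> zB; exists (fun=> 0); split=> // [|i]; rewrite ?big1 ?mul0r ?add0r.
Qed.

Lemma dominated_le B B' : B <= B' -> dominated g rho B `<=` dominated g rho B'.
Proof.
move=> BB' z [A [A0 A1 zA]]; exists A; split=> // i.
by apply: le_trans (zA i) _; rewrite lerD2l.
Qed.

Lemma conv_dominated B (S : set 'rV[R]_d) :
  S `<=` dominated g rho B -> Defs.conv S `<=` dominated g rho B.
Proof.
move=> SB _ [k [w [p [w0 [w1 [Sp ->]]]]]].
have /choice [A pA] : forall j, exists A : 'I_m -> R, [/\ forall i, 0 <= A i,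
    \sum_i A i <= 1 & forall i, dotv (p j) (g i) <= A i * rho i + B].
  by move=> j; exact: SB.
exists (fun i => \sum_j w j * A j i); split.
- by move=> i; apply: sumr_ge0 => j _; rewrite mulr_ge0 //; case: (pA j).
- rewrite exchange_big /= -w1; apply: ler_sum => j _; rewrite -mulr_sumr.
  by rewrite ler_piMr //; case: (pA j).
- move=> i; rewrite dotv_suml mulr_suml -[B]mul1r -w1 mulr_suml -big_split /=.
  apply: ler_sum => j _; rewrite -mulrA -mulrDr ler_wpM2l //.
  by case: (pA j).
Qed.

Lemma polytope_vertices_ge (P : set 'rV[R]_d) B eps :
  polytope P -> (forall i, 0 < rho i) -> P `<=` dominated g rho B ->
  (forall i, exists2 z, P z & B + eps * rho i <= dotv z (g i)) ->
  exists W, [/\ uniq W, forall w, w \in W -> extreme_point P w &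
                m%:R * eps <= (size W)%:R].
Proof.
move=> polyP rho_gt0 PB z_i.
have /choice [A pA] : forall z, exists A : 'I_m -> R, P z -> [/\ forall i, 0 <= A i,
    \sum_i A i <= 1 & forall i, dotv z (g i) <= A i * rho i + B].
  move=> z; case: (pselect (P z)) => [/PB [A hA] | nPz]; first by exists A.
  by exists (fun=> 0) => /nPz.
have /choice [v pv] : forall i, exists v, extreme_point P v /\ eps <= A v i.
  move=> i; have [z Pz zi] := z_i i.
  have [v vP zv] := polytope_extreme_ge (g i) polyP Pz.
  exists v; split=> //; have [_ _ /(_ i) vA] := pA v vP.1.
  by rewrite -(ler_pM2r (rho_gt0 i)); lra.
exists (undup [seq v i | i <- enum 'I_m]); split.
- exact: undup_uniq.
- by move=> w; rewrite mem_undup => /mapP [i _ ->]; exact: (pv i).1.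
- apply: fractional_count => [j i|j|i]; last exact: (pv i).2.
  + by have [A0 _ _] := pA _ (pv j).1.1.
  + by have [_ A1 _] := pA _ (pv j).1.1.
Qed.

End Dominated.

Lemma dominated_lift0 d m (g : 'I_m -> 'rV[R]_d) rho B t a y :
  dominated g rho B y ->
  dominated (fun i => Defs.lift0 a (g i)) rho (B + t * a) (Defs.lift0 t y).
Proof.
move=> [A [A0 A1 yA]]; exists A; split=> // i.
by rewrite dotv_lift0 addrA [_ + dotv _ _]addrC lerD2r.
Qed.

Section Kbody.
Context {n m : nat} (x : 'I_m -> 'rV[R]_n).
Let rho i := dotv (x i) (x i).

Lemma Q1body_x i : Q1body x (x i).
Proof. by apply: sub_conv; left; apply: sub_conv; exists i; left. Qed.

Lemma Kbody_lift0_x (eta kappa : R) i : Kbody x eta kappa (Defs.lift0 (1 - eta) (x i)).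
Proof. by apply: sub_conv; left; exists (x i) => //; apply: sub_conv; exists i; left. Qed.

Lemma Qbody_dominated (s : R) : 0 <= s ->
  (forall i j, i != j -> `|dotv (x i) (x j)| <= s) -> Qbody x `<=` dominated x rho s.
Proof.
move=> s0 xs; apply: conv_dominated => _ [k [-> | ->]].
- exists (fun i => (i == k)%:R); split=> [i||i]; first by rewrite ler0n.
  + by rewrite (bigD1 k) //= eqxx big1 ?addr0 // => i /negPf ->.
  + have [->|ik] := eqVneq i k; first by rewrite mul1r /rho lerDl.
    by rewrite mul0r add0r ler_normlW // dotvC xs.
- apply: dominated0 => i; rewrite dotvNl.
  have [->|ik] := eqVneq i k; first by rewrite lerNl (le_trans _ (dotvv_ge0 _)) ?oppr_le0.
  by rewrite ler_normlW // normrN dotvC xs.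
Qed.

Lemma Kbody_dominated (eta kappa s t : R) : 0 <= s -> 0 <= kappa ->
  (forall i j, i != j -> `|dotv (x i) (x j)| <= s) ->
  Kbody x eta kappa `<=` dominated (fun i => Defs.lift0 (- t) (x i)) rho
    (Num.max (s - t * (1 - eta)) (kappa * (1 + eta * t))).
Proof.
move=> s0 kappa0 xs; apply: conv_dominated => _ [[q Qq <-] | [y Qy <-]].
- apply: (@dominated_le _ _ _ _ (s - t * (1 - eta))); first by rewrite le_max lexx.
  have := dominated_lift0 (1 - eta) (- t) (Qbody_dominated s0 xs Qq).
  by rewrite mulrN mulrC.
- apply: (@dominated_le _ _ _ _ (kappa * (1 + eta * t))); first by rewrite le_max lexx orbT.
  apply: dominated0 => i.
  have := ler_wpM2l kappa0 (Qy _ (Q1body_x i)).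
  by rewrite dotv_lift0 dotvZl; lra.
Qed.

End Kbody.

(* [c] tilts the test functionals along [e_0]: for [s >= 8] the choice
   [c (1 - eta) = s] absorbs the cross terms of [Q], for small [s] no tilt
   ([c = 0]) is needed. *)
Lemma exists_shift (s eta kappa : R) : 0 < s -> 0 <= eta -> eta * s <= 1 -> 0 < kappa ->
  exists c, forall r, s ^+ 2 / 4 <= r ->
    Num.max (s - c * (1 - eta)) (kappa * (1 + eta * c)) + 4 <=
    (r - c * (1 - eta)) / (s ^+ 2 / (96 * Num.max kappa 1)).
Proof.
move=> s0 eta0 etas kappa0; set M := Num.max kappa 1; set lam := s ^+ 2 / (96 * M).
have M1 : 1 <= M by rewrite le_max lexx orbT.
have kappaM : kappa <= M by rewrite le_max lexx.
have lam0 : 0 < lam by apply: divr_gt0; [exact: exprn_gt0 | lra].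
have Mlam : M * lam = s ^+ 2 / 96 by rewrite /lam; field; rewrite gt_eqF //; lra.
have scaled y k : y <= k * M -> (y + 4) * lam <= (k + 4) * (s ^+ 2 / 96).
  by move=> ykM; rewrite -Mlam mulrA (ler_pM2r lam0) mulrDl; lra.
have s2_ge0 : 0 <= s ^+ 2 by exact: sqr_ge0.
case: (lerP 8 s) => s8.
- exists (s / (1 - eta)) => r r_ge.
  have eta_small : eta <= 1 / 8 by nra.
  have shift : s / (1 - eta) * (1 - eta) = s by rewrite mulfVK // gt_eqF //; lra.
  have eta_c : eta * (s / (1 - eta)) <= 2.
    by rewrite mulrA ler_pdivrMr; lra.
  rewrite shift ler_pdivlMr //; apply: le_trans (scaled _ 3 _) _.
    by rewrite ge_max; apply/andP; split; nra.
  nra.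
- exists 0 => r r_ge; rewrite mul0r subr0 ler_pdivlMr //.
  apply: le_trans (scaled _ 8 _) _; last lra.
  by rewrite ge_max mulr0 addr0 mulr1; apply/andP; split; lra.
Qed.

Lemma Kbody_vertices_ge n m (x : 'I_m -> 'rV[R]_n) (s eta kappa : R)
    (P : set 'rV[R]_n.+1) :
  0 < s -> s ^+ 2 <= n%:R -> 0 <= eta -> eta * s <= 1 -> 0 < kappa ->
  (forall i, s / 2 <= normv (x i) <= 2 * s) ->
  (forall i j, i != j -> `|dotv (x i) (x j)| <= s) ->
  polytope P -> P `<=` Kbody x eta kappa ->
  Kbody x eta kappa `<=` dil (s ^+ 2 / (96 * Num.max kappa 1)) P ->
  exists W, [/\ uniq W, forall w, w \in W -> extreme_point P w &
                m%:R / n%:R <= (size W)%:R :> R].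
Proof.
move=> s0 sn eta0 etas kappa0 xnorm xs polyP PK KP.
have [c shift] := exists_shift s0 eta0 etas kappa0.
set lam := s ^+ 2 / (96 * _) in KP shift.
have lam0 : 0 < lam by apply: divr_gt0; rewrite ?exprn_gt0 ?mulr_gt0 ?lt_max ?ltr01 ?orbT.
have rho_bounds i : s ^+ 2 / 4 <= dotv (x i) (x i) <= 4 * s ^+ 2.
  by have /andP [lo hi] := xnorm i; rewrite -normv_sqr; apply/andP; split; nra.
apply: (polytope_vertices_ge (g := fun i => Defs.lift0 (- c) (x i))) polyP _
  (subset_trans PK (@Kbody_dominated _ _ x eta kappa s c (ltW s0) (ltW kappa0) xs)) _.
- by move=> i; have /andP [lo _] := rho_bounds i; apply: lt_le_trans lo; nra.
- move=> i; have [z Pz zE] := KP _ (Kbody_lift0_x x eta kappa i).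
  exists z => //; have /andP [lo hi] := rho_bounds i.
  have -> : dotv z (Defs.lift0 (- c) (x i)) = (dotv (x i) (x i) - c * (1 - eta)) / lam.
    rewrite -[z](scalerK (lt0r_neq0 lam0)) zE dotvZl dotv_lift0 mulrC.
    by congr (_ / _); ring.
  by apply: le_trans (shift _ lo); rewrite lerD2l ler_pdivrMl; nra.
Qed.

Lemma eventually_C0_sqrt_ln_ge1 (C0 : R) : 0 < C0 -> exists N, forall n, (N <= n)%N ->
  forall m, C0 * n%:R <= m%:R -> (0 < n)%N /\ 1 <= C0 * Num.sqrt (ln m%:R).
Proof.
move=> C0_gt0; set b := expR (C0 ^- 2) / C0.
have b_ge0 : 0 <= b by rewrite divr_ge0 ?expR_ge0 ?ltW.
exists (Num.Def.archi_bound b).+1 => n bn m Cnm; split; first exact: leq_trans bn.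
have em : expR (C0 ^- 2) < m%:R.
  apply: lt_le_trans Cnm; rewrite mulrC -ltr_pdivrMr //.
  by apply: lt_le_trans (archi_boundP b_ge0) _; rewrite ler_nat ltnW.
have lnm : C0 ^- 2 <= ln m%:R.
  by rewrite -[X in X <= _]expRK ler_ln ?posrE ?expR_gt0 ?(lt_trans (expR_gt0 _) em) ?ltW.
have : C0^-1 <= Num.sqrt (ln m%:R).
  rewrite -[C0^-1]gtr0_norm ?invr_gt0 // -sqrtr_sqr ler_sqrt ?exprVn //.
  by apply: le_trans lnm; rewrite invr_ge0 exprn_ge0 // ltW.
by move/(ler_wpM2l (ltW C0_gt0)); rewrite mulfV ?gt_eqF.
Qed.

End Development.

Theorem lemma3p6 (R : realType) (C1 C2 : R) :
  0 < C1 -> 0 < C2 -> C1_property C1 -> C2_property C2 ->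
  let C0 := Num.max C1 (100 * C2) in
  exists N : nat, forall n : nat, (N <= n)%N ->
  forall m : nat, C0 * n%:R <= m%:R -> m%:R <= expR (n%:R / C0) ->
  let Delta := C0 * Num.sqrt (ln m%:R) in
  forall x : 'I_m -> 'rV[R]_n,
    (forall i, Num.sqrt n%:R / (2 * Delta) <= normv (x i) <= 2 * Num.sqrt n%:R / Delta) ->
    (forall i j, i != j -> `|dotv (x i) (x j)| <= Num.sqrt n%:R / Delta) ->
  forall kappa eta : R, 0 < kappa -> 0 <= eta <= (Num.sqrt n%:R)^-1 ->
  forall P : set 'rV[R]_n.+1, polytope P ->
    P `<=` Kbody x eta kappa ->
    Kbody x eta kappa `<=` dil (n%:R / (96 * Delta ^+ 2 * Num.max kappa 1)) P ->
  exists W : seq 'rV[R]_n.+1,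
    [/\ uniq W, (forall w, w \in W -> extreme_point P w) &
        m%:R / n%:R <= (size W)%:R :> R].
Proof.
(* The properties of [C1] and [C2] only serve to build suitable [x]; here [x]
   is given. *)
move=> C1_gt0 _ _ _ C0.
have C0_gt0 : 0 < C0 by apply: lt_le_trans C1_gt0 _; rewrite le_max lexx.
have [N large] := eventually_C0_sqrt_ln_ge1 C0_gt0.
exists N => n nN m Cnm _ Delta x xnorm xdot kappa eta kappa0 /andP [eta0 eta_le].
move=> P polyP PK KP; have [n0 Delta_ge1] := large n nN m Cnm.
have sn_gt0 : 0 < Num.sqrt n%:R :> R by rewrite sqrtr_gt0 ltr0n.
have Delta_gt0 : 0 < Delta := lt_le_trans ltr01 Delta_ge1.
have s_le : Num.sqrt n%:R / Delta <= Num.sqrt n%:R.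
  by rewrite ler_pdivrMr // ler_peMr // ltW.
have s_sqr : (Num.sqrt n%:R / Delta) ^+ 2 = n%:R / Delta ^+ 2.
  by rewrite expr_div_n sqr_sqrtr ?ler0n.
apply: (Kbody_vertices_ge (x := x) (s := Num.sqrt n%:R / Delta) (eta := eta) (kappa := kappa)) => //.
- exact: divr_gt0.
- by rewrite s_sqr ler_pdivrMr ?exprn_gt0 // ler_peMr ?ler0n ?exprn_ege1.
- apply: (le_trans (y := eta * Num.sqrt n%:R)); first exact: (ler_wpM2l eta0 s_le).
  by rewrite -ler_pdivlMr // div1r.
- by move=> i; have := xnorm i; rewrite invfM mulrA mulrAC -[2 * _ / Delta]mulrA.
- by rewrite s_sqr -mulrA -invfM mulrCA mulrA.
Qed.
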